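(* Let $A$ be a bounded distributive lattice, $X$ its Priestley space, and $\kappa$ a regular cardinal. Then every existing join of fewer than $\kappa$ elements in $A$ is distributive if and only if for each $\kappa$-clopen upset $U$ of $X$ such that ${\sf cl_2}(U)$ is clopen, we have ${\sf cl_2}(U)={\sf cl}(U)$.
   Context: A join $\bigvee S$ is distributive if $a\wedge\bigvee S=\bigvee\{a\wedge s:s\in S\}$ for all $a$. The Priestley space $X$ of $A$ is the set of prime filters ordered by inclusion, with topology generated by $\{\mathfrak s(a)\setminus\mathfrak s(b)\}$, $\mathfrak s(a)=\{x:a\in x\}$; $\mathfrak s$ is an isomorphism of $A$ onto the lattice of clopen upsets. ${\sf cl}$ is topological closure and ${\sf cl_2}(S)={\uparrow}{\sf cl}(S)$ (closure in the topology of open downsets). A $\kappa$-clopen upset is a union of fewer than $\kappa$ clopen upsets. *)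

From HB Require Import structures.
From mathcomp Require Import all_boot all_order.
From mathcomp Require Import boolp classical_sets cardinality.
Set Implicit Arguments. Unset Strict Implicit. Unset Printing Implicit Defensive.
Import Order.TTheory.
Local Open Scope classical_set_scope.

(* |S| < |K|  (K a type standing for the cardinal kappa = |K|) *)
Definition card_lt (T K : Type) (S : set T) : Prop :=
  (S #<= [set: K])%card /\ ~ ([set: K] #<= S)%card.

Definition regular_cardinal (K : Type) : Prop :=
  infinite_set [set: K] /\
  forall F : set (set K),
    card_lt K F -> (forall V, F V -> card_lt K V) ->
    \bigcup_(V in F) V <> [set: K].

Section Lattice.
Context {disp : Order.disp_t} {A : tbDistrLatticeType disp}.

Definition is_join (S : set A) (j : A) : Prop :=
  (forall s, S s -> (s <= j)%O) /\
  (forall u, (forall s, S s -> (s <= u)%O) -> (j <= u)%O).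

Definition distributive_join (S : set A) (j : A) : Prop :=
  forall a : A, is_join [set (Order.meet a s) | s in S] (Order.meet a j).

Definition prime_filter (P : set A) : Prop :=
  [/\ P Order.top, ~ P Order.bottom,
      (forall a b, P a -> (a <= b)%O -> P b),
      (forall a b, P a -> P b -> P (Order.meet a b)) &
      (forall a b, P (Order.join a b) -> P a \/ P b)].

Definition priestley : Type := {P : set A | prime_filter P}.

Definition ple (x y : priestley) : Prop := proj1_sig x `<=` proj1_sig y.

Definition stone (a : A) : set priestley := [set x | proj1_sig x a].

Definition basic (l : seq (A * A)) : set priestley :=
  [set x | forall p, p \in l -> (stone p.1 `\` stone p.2) x].

(* topology generated by the subbasis { s(a) \ s(b) } *)
Definition popen (U : set priestley) : Prop :=
  forall x, U x -> exists l, basic l x /\ basic l `<=` U.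

Definition pclosed (U : set priestley) : Prop := popen (~` U).

Definition pclopen (U : set priestley) : Prop := popen U /\ pclosed U.

Definition pcl (S : set priestley) : set priestley :=
  [set x | forall U, popen U -> U x -> exists2 y, U y & S y].

Definition pupset (U : set priestley) : Prop :=
  forall x y, U x -> ple x y -> U y.

Definition pup (S : set priestley) : set priestley :=
  [set y | exists2 x, S x & ple x y].

Definition pcl2 (S : set priestley) : set priestley := pup (pcl S).

Definition clopen_upset (U : set priestley) : Prop := pclopen U /\ pupset U.

Definition kappa_clopen_upset (K : Type) (U : set priestley) : Prop :=
  exists F : set (set priestley),
    card_lt K F /\ (forall V, F V -> clopen_upset V) /\
    U = \bigcup_(V in F) V.

End Lattice.

(* Every clopen upset of X is some s(a), so a κ-clopen upset is U = ⋃_{s ∈ S} s(s)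
   with |S| < κ.  If cl_2(U) is clopen, it is s(j) for the join j of S; conversely,
   cl_2(U) = s(j) whenever S has a join j.  A point x lies in cl(U) exactly when
   c ∈ x and c ∧ s ≤ d for all s ∈ S force d ∈ x; so s(j) ⊆ cl(U) holds precisely
   when a ∧ j is the join of the a ∧ s for every a, i.e. when the join of S is
   distributive.

   All facts about X come from one prime filter theorem relative to an entailment
   relation R on A: a filter closed under R and disjoint from a join-closed set
   containing ⊥ extends to a prime filter with the same properties.  Taking R c d to
   mean s(c) ∩ Z ⊆ s(d) yields points of cl(Z); this replaces the compactness of X. *)

From HB Require Import structures.
From mathcomp Require Import all_boot all_order.
From mathcomp Require Import boolp classical_sets cardinality.
Set Implicit Arguments. Unset Strict Implicit. Unset Printing Implicit Defensive.
Import Order.TTheory.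
Local Open Scope classical_set_scope.

Lemma card_lt_image (T U K : Type) (f : T -> U) (S : set T) :
  card_lt K S -> card_lt K (f @` S).
Proof.
move=> [SK KS]; split; first exact: card_le_trans (card_image_le f S) SK.
by move=> Kf; apply: KS; exact: card_le_trans Kf (card_image_le f S).
Qed.

Section Priestley.
Context {disp : Order.disp_t} {A : tbDistrLatticeType disp}.
Local Notation X := (@priestley disp A).
Local Notation pt x := (proj1_sig x).
Implicit Types (a b c d e j : A) (x y z : X) (S : set A) (U V Z : set X).

Lemma pf_top x : pt x \top%O.
Proof. by case: x => P []. Qed.

Lemma pf_bot x : ~ pt x \bot%O.
Proof. by case: x => P []. Qed.

Lemma pf_le x a b : pt x a -> (a <= b)%O -> pt x b.
Proof. by case: x => P /= [] _ _ up _ _; apply: up. Qed.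

Lemma pf_meetP x a b : pt x (a `&` b)%O <-> pt x a /\ pt x b.
Proof.
split=> [xab | [xa xb]]; first by split; apply: pf_le xab _; rewrite ?leIl ?leIr.
by case: x xa xb => P /= [] _ _ _ meet _; apply: meet.
Qed.

Lemma pf_joinP x a b : pt x (a `|` b)%O <-> pt x a \/ pt x b.
Proof.
split=> [|[xa | xb]]; first by case: x => P /= [] _ _ _ _; apply.
- by apply: pf_le xa _; rewrite leUl.
- by apply: pf_le xb _; rewrite leUr.
Qed.

Lemma basic_stone_diff (l : seq (A * A)) :
  exists a b, basic l = stone a `\` stone b.
Proof.
elim: l => [|[a' b'] l [a [b IH]]].
  exists \top%O, \bot%O; apply/seteqP; split=> x /= _.
    by split; [exact: pf_top | exact: pf_bot].
  by move=> p; rewrite in_nil.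
exists (a' `&` a)%O, (b' `|` b)%O; apply/seteqP; split=> x /=.
- move=> xl; have [xa' xb'] : (stone a' `\` stone b') x := xl (a', b') (mem_head _ _).
  have [xa xb] : (stone a `\` stone b) x.
    by rewrite -IH => p pl; apply: xl; rewrite in_cons pl orbT.
  by split; [apply/pf_meetP | case/pf_joinP].
- move=> [/pf_meetP [xa' xa] /pf_joinP xb] p; rewrite in_cons => /orP [/eqP -> | pl].
    by split=> // xb'; apply: xb; left.
  have : (stone a `\` stone b) x by split=> // xb''; apply: xb; right.
  by rewrite -IH; apply.
Qed.

Lemma popen_stone_diff a b : popen (stone a `\` stone b).
Proof.
move=> x xab; exists [:: (a, b)]; split=> [p | y yab].
  by rewrite mem_seq1 => /eqP ->.
by apply: (yab (a, b)); rewrite mem_seq1.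
Qed.

Lemma popen_basis (O : set X) x : popen O -> O x ->
  exists a b, (stone a `\` stone b) x /\ stone a `\` stone b `<=` O.
Proof.
move=> Oo Ox; have [l [lx lO]] := Oo x Ox.
by have [a [b lab]] := basic_stone_diff l; exists a, b; rewrite -lab.
Qed.

Lemma stone0 : stone \bot%O = set0 :> set X.
Proof. by apply/seteqP; split=> // x /pf_bot. Qed.

Lemma stone1 : stone \top%O = setT :> set X.
Proof. by apply/seteqP; split=> // x _; exact: pf_top. Qed.

Lemma stone_clopen_upset a : clopen_upset (stone a).
Proof.
split; last by move=> x y xa; apply.
split; first by rewrite -[stone a]setD0 -stone0; exact: popen_stone_diff.
by rewrite /pclosed -setTD -stone1; exact: popen_stone_diff.
Qed.

Definition entailment (R : A -> A -> Prop) :=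
  [/\ forall c d, (c <= d)%O -> R c d,
      forall c d e, R c d -> R d e -> R c e,
      forall c d d', R c d -> R c d' -> R c (d `&` d')%O &
      forall c c' d d', R c d -> R c' d' -> R (c `|` c')%O (d `|` d')%O].

Definition R_closed (R : A -> A -> Prop) (F : set A) :=
  forall c d, F c -> R c d -> F d.

Definition meet_closed (F : set A) := forall a b, F a -> F b -> F (a `&` b)%O.

Section PrimeFilterTheorem.
Variables (R : A -> A -> Prop) (F P : set A).
Hypotheses (entR : entailment R) (Ftop : F \top%O) (FI : meet_closed F)
  (FR : R_closed R F) (Pbot : P \bot%O)
  (PU : forall a b, P a -> P b -> P (a `|` b)%O) (FP : forall a, F a -> ~ P a).

Let good (M : set A) :=
  [/\ F `<=` M, meet_closed M, R_closed R M & forall a, M a -> ~ P a].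

Let maximal_good : exists M, good M /\ forall B, good B -> ~ M `<` B.
Proof.
(* [Zorn_bigcup] also needs the union of the empty chain, hence the extra [set0]. *)
have [M [MP Mmax]] : exists M, (good M \/ M = set0) /\
    forall B, M `<` B -> ~ (good B \/ B = set0).
  apply: Zorn_bigcup => G GP Gtot.
  have goodG Y a : G Y -> Y a -> good Y.
    by move=> GY Ya; case: (GP Y GY) => // Y0; move: Ya; rewrite Y0.
  have [[a [Y GY Ya]] | empty] := pselect ((\bigcup_(Z in G) Z) !=set0); last first.
    by right; apply/seteqP; split=> // b Gb; apply: empty; exists b.
  left; split.
  - by move=> b Fb; exists Y => //; case: (goodG Y a GY Ya) => + _ _ _; apply.
  - move=> b c [Z1 GZ1 Z1b] [Z2 GZ2 Z2c].
    case: (Gtot Z1 Z2 GZ1 GZ2) => [Z12 | Z21].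
      by exists Z2 => //; case: (goodG Z2 c GZ2 Z2c) => _ + _ _; apply=> //; exact: Z12.
    by exists Z1 => //; case: (goodG Z1 b GZ1 Z1b) => _ + _ _; apply=> //; exact: Z21.
  - move=> c d [Z GZ Zc] Rcd; exists Z => //.
    by case: (goodG Z c GZ Zc) => _ _ ZR _; exact: ZR Rcd.
  - by move=> b [Z GZ Zb]; case: (goodG Z b GZ Zb) => _ _ _; apply.
exists M; split=> [|B gB MB]; last by apply: (Mmax B MB); left.
case: MP => // M0; exfalso; apply: (Mmax F); last by left; split.
by rewrite M0; split; [exact: sub0set | move=> /(_ _ Ftop)].
Qed.

Theorem prime_filter_theorem :
  exists x, F `<=` pt x /\ (forall a, pt x a -> ~ P a) /\ R_closed R (pt x).
Proof.
have [R_le R_trans R_meet R_join] := entR.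
have [M [[FM MI MR MP] Mmax]] := maximal_good.
(* By maximality, the R-filter generated by [M] and any [b] outside [M] meets [P]. *)
have extend b : ~ M b -> exists m e, [/\ M m, R (m `&` b)%O e & P e].
  move=> notMb; apply: contrapT => noext.
  pose Mb := [set e | exists2 m, M m & R (m `&` b)%O e].
  have MMb : M `<=` Mb by move=> m Mm; exists m => //; apply: R_le; exact: leIl.
  apply: (Mmax Mb); last first.
    split=> // /(_ b) MbM; apply: notMb; apply: MbM.
    by exists \top%O; [exact: FM | apply: R_le; rewrite meet1x].
  split.
  - by move=> c /FM /MMb.
  - move=> c c' [m Mm Rc] [m' Mm' Rc']; exists (m `&` m')%O; first exact: MI.
    by apply: R_meet; [apply: R_trans Rc | apply: R_trans Rc'];
      apply: R_le; rewrite leI2 ?leIl ?leIr.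
  - by move=> c d [m Mm Rc] Rcd; exists m => //; apply: R_trans Rcd.
  - by move=> e [m Mm Re] Pe; apply: noext; exists m, e.
have Mprime a a' : M (a `|` a')%O -> M a \/ M a'.
  move=> Maa'; apply: contrapT => /not_orP [Ma Ma'].
  have [m [e [Mm Re Pe]]] := extend a Ma.
  have [m' [e' [Mm' Re' Pe']]] := extend a' Ma'.
  apply: (MP (e `|` e')%O); last exact: PU.
  apply: (MR ((m `&` m') `&` (a `|` a'))%O); first exact: MI (MI _ _ Mm Mm') Maa'.
  apply: R_trans (R_join _ _ _ _ Re Re'); apply: R_le.
  by rewrite meetUr leU2 // leI2 ?leIl ?leIr.
have pfM : prime_filter M.
  split=> //; first exact: FM.
  - by move/MP; apply.
  - by move=> a b Ma ab; apply: MR Ma (R_le _ _ ab).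
by exists (exist _ M pfM).
Qed.

End PrimeFilterTheorem.

Lemma entailment_le : entailment (fun c d => (c <= d)%O).
Proof.
split=> [// | c d e | c d d' cd cd' | c c' d d'].
- exact: le_trans.
- by rewrite lexI cd cd'.
- exact: leU2.
Qed.

Lemma stone_subset_le a b : stone a `<=` stone b -> (a <= b)%O.
Proof.
move=> ab; apply: contrapT => nab.
have FI : meet_closed [set d | (a <= d)%O] by move=> c d /= ac ad; rewrite lexI ac ad.
have FR : R_closed (fun c d => (c <= d)%O) [set d | (a <= d)%O].
  by move=> c d; exact: le_trans.
have PU c d : (c <= b)%O -> (d <= b)%O -> (c `|` d <= b)%O.
  by move=> cb db; rewrite leUx cb db.
have FP c : (a <= c)%O -> ~ (c <= b)%O.
  by move=> ac cb; apply: nab; exact: le_trans ac cb.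
have [x [ax [xb _]]] :=
  prime_filter_theorem entailment_le (lex1 a) FI FR (le0x b) PU FP.
exact: xb b (ab x (ax a (lexx a))) (lexx b).
Qed.

Definition entails_on (Z : set X) c d := stone c `&` Z `<=` stone d.

Lemma entailment_on Z : entailment (entails_on Z).
Proof.
split=> [c d cd y [yc _] | c d e cd de y [yc yZ] | c d d' cd cd' y cZ |
         c c' d d' cd cd' y [/pf_joinP [yc | yc'] yZ]].
- exact: pf_le yc cd.
- exact: de y (conj (cd y (conj yc yZ)) yZ).
- by apply/pf_meetP; split; [exact: cd | exact: cd'].
- by apply/pf_joinP; left; exact: cd y (conj yc yZ).
- by apply/pf_joinP; right; exact: cd' y (conj yc' yZ).
Qed.

Lemma pclP Z x : pcl Z x <-> R_closed (entails_on Z) (pt x).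
Proof.
split=> [xZ c d xc cd | xR O Oo Ox].
  apply: contrapT => xd.
  have [y [yc yd] yZ] := xZ _ (@popen_stone_diff c d) (conj xc xd).
  exact: yd (cd y (conj yc yZ)).
have [a [b [[xa xb] abO]]] := popen_basis Oo Ox.
apply: contrapT => noy; apply: xb; apply: (xR a) => // y [ya yZ].
by apply: contrapT => yb; apply: noy; exists y => //; exact: abO.
Qed.

Lemma pcl_sub Z : Z `<=` pcl Z.
Proof. by move=> x Zx O _ Ox; exists x. Qed.

Lemma pcl_sub_closed U Z : pclosed Z -> U `<=` Z -> pcl U `<=` Z.
Proof.
move=> Zc UZ x xU; apply: contrapT => nZx.
have [y nZy Uy] := xU _ Zc nZx.
exact: nZy (UZ y Uy).
Qed.

Lemma pcl_closed Z : pclosed Z -> pcl Z `<=` Z.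
Proof. by move=> Zc; exact: pcl_sub_closed. Qed.

Lemma pcl_sub_pcl2 U : pcl U `<=` pcl2 U.
Proof. by move=> x xU; exists x. Qed.

Lemma pup_upset U : pupset (pup U).
Proof. by move=> y z [x Ux xy] yz; exists x => // a /xy /yz. Qed.

Lemma pcl2_sub_closed_upset U Z :
  pclosed Z -> pupset Z -> U `<=` Z -> pcl2 U `<=` Z.
Proof. by move=> Zc Zup UZ y [x xU xy]; exact: Zup (pcl_sub_closed Zc UZ xU) xy. Qed.

Lemma open_upset_stone_cover (V : set X) x : popen V -> pupset V -> V x ->
  exists2 c, pt x c & stone c `<=` V.
Proof.
move=> Vo Vup Vx; apply: contrapT => nocover.
have [R_le R_trans R_meet _] := entailment_on (~` V).
pose F := [set d | exists2 c, pt x c & entails_on (~` V) c d].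
have Ftop : F \top%O by exists \top%O; [exact: pf_top | exact: R_le].
have FI : meet_closed F.
  move=> d d' [c xc cd] [c' xc' cd']; exists (c `&` c')%O; first exact/pf_meetP.
  by apply: R_meet; [apply: R_trans cd | apply: R_trans cd'];
    apply: R_le; rewrite ?leIl ?leIr.
have FR : R_closed (entails_on (~` V)) F.
  by move=> d e [c xc cd] de; exists c => //; exact: R_trans de.
have PU a b : a = \bot%O -> b = \bot%O -> (a `|` b)%O = \bot%O.
  by move=> -> ->; rewrite joinxx.
have FP d : F d -> d <> \bot%O.
  move=> [c xc cd] d0; apply: nocover; exists c => // y yc; apply: contrapT => yV.
  by apply: (@pf_bot y); rewrite -d0; exact: cd y (conj yc yV).
have [y [Fy [_ yR]]] :=
  prime_filter_theorem (entailment_on (~` V)) Ftop FI FR erefl PU FP.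
have nVy : (~` V) y by apply: pcl_closed; [rewrite /pclosed setCK | exact/pclP].
by apply: nVy; apply: Vup Vx _ => c xc; apply: Fy; exists c => //; exact: R_le.
Qed.

Lemma closed_point_avoiding (V : set X) : pclosed V ->
  (forall d, V `<=` stone d -> ~ stone d `<=` V) ->
  exists2 x, V x & forall d, pt x d -> ~ stone d `<=` V.
Proof.
move=> Vc noV.
have FI : meet_closed [set d | V `<=` stone d].
  by move=> c d cV dV y Vy; apply/pf_meetP; split; [exact: cV | exact: dV].
have FR : R_closed (entails_on V) [set d | V `<=` stone d].
  by move=> c d cV cd y Vy; exact: cd y (conj (cV y Vy) Vy).
have PU c d : stone c `<=` V -> stone d `<=` V -> stone (c `|` d)%O `<=` V.
  by move=> cV dV y /pf_joinP [yc | yd]; [exact: cV | exact: dV].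
have Ftop : V `<=` stone \top%O by rewrite stone1.
have Pbot : stone \bot%O `<=` V by rewrite stone0.
have [x [_ [xP xR]]] := prime_filter_theorem (entailment_on V) Ftop FI FR Pbot PU noV.
by exists x => //; apply: pcl_closed Vc _ _; exact/pclP.
Qed.

Lemma clopen_upset_stone (V : set X) : clopen_upset V -> exists a, V = stone a.
Proof.
move=> [[Vo Vc] Vup]; apply: contrapT => nostone.
have [x Vx xV] : exists2 x, V x & forall d, pt x d -> ~ stone d `<=` V.
  apply: closed_point_avoiding Vc _ => d Vd dV.
  by apply: nostone; exists d; apply/seteqP.
have [c xc cV] := open_upset_stone_cover Vo Vup Vx.
exact: xV c xc cV.
Qed.

Definition stone_union (S : set A) : set X := \bigcup_(s in S) stone s.

Lemma entails_on_stone_union S c d :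
  entails_on (stone_union S) c d <-> (forall s, S s -> (c `&` s <= d)%O).
Proof.
split=> [cd s Ss | csd y [yc [s Ss ys]]].
  by apply: stone_subset_le => y /pf_meetP [yc ys]; apply: cd; split=> //; exists s.
by apply: pf_le (csd s Ss); exact/pf_meetP.
Qed.

Lemma pcl2_stone_union S j : is_join S j -> pcl2 (stone_union S) = stone j.
Proof.
move=> [jub jlub]; apply/seteqP; split.
  have [[_ jc] jup] := stone_clopen_upset j.
  by apply: pcl2_sub_closed_upset jc jup _ => y [s Ss ys]; exact: pf_le ys (jub s Ss).
move=> x xj.
have FI : meet_closed [set d | (j <= d)%O] by move=> c d /= jc jd; rewrite lexI jc jd.
have FR : R_closed (entails_on (stone_union S)) [set d | (j <= d)%O].
  move=> c d jc /entails_on_stone_union cd; apply: jlub => s Ss.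
  by apply: le_trans (cd s Ss); rewrite lexI (le_trans (jub s Ss) jc) lexx.
have PU c d : ~ pt x c -> ~ pt x d -> ~ pt x (c `|` d)%O.
  by move=> xc xd /pf_joinP [].
have FP d : (j <= d)%O -> ~ ~ pt x d by move=> jd; apply; exact: pf_le xj jd.
have [y [_ [yx yR]]] := prime_filter_theorem (entailment_on (stone_union S))
  (lex1 j) FI FR (@pf_bot x) PU FP.
exists y; first exact/pclP.
by move=> d yd; apply: contrapT; exact: yx.
Qed.

Lemma is_join_pcl2 S j : pcl2 (stone_union S) = stone j -> is_join S j.
Proof.
move=> Uj; split=> [s Ss | u ub]; apply: stone_subset_le; rewrite -Uj.
  by move=> y ys; apply/pcl_sub_pcl2/pcl_sub; exists s.
have [[_ uc] uup] := stone_clopen_upset u.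
by apply: pcl2_sub_closed_upset uc uup _ => y [s Ss ys]; exact: pf_le ys (ub s Ss).
Qed.

Lemma distributive_joinE S j : is_join S j ->
  distributive_join S j <-> stone j `<=` pcl (stone_union S).
Proof.
move=> [jub _]; split=> [Sdist x xj | jcl a].
  apply/pclP => c d xc /entails_on_stone_union cd.
  have [_ least] := Sdist c.
  apply: pf_le (least d _); first exact/pf_meetP.
  by move=> _ [s Ss <-]; exact: cd.
split=> [_ [s Ss <-] | u ub]; first exact: leI2 (lexx a) (jub s Ss).
apply: stone_subset_le => x /pf_meetP [xa xj].
apply: (proj1 (pclP _ _) (jcl x xj) a u xa).
by apply/entails_on_stone_union => s Ss; apply: ub; exists s.
Qed.

Lemma kappa_clopen_upsetP K U :
  kappa_clopen_upset K U <-> exists2 S, card_lt K S & U = stone_union S.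
Proof.
split=> [[F [FK [Fclopen ->]]] | [S SK ->]].
  have [f fE] : {f : set X -> A & forall V, F V -> V = stone (f V)}.
    apply: (@choice _ _ (fun V a => F V -> V = stone a)) => V.
    have [FV | nFV] := pselect (F V); last by exists \top%O.
    by have [a ->] := clopen_upset_stone (Fclopen V FV); exists a.
  exists (f @` F); first exact: card_lt_image.
  by rewrite /stone_union bigcup_image; exact: eq_bigcupr.
exists (stone @` S); split; first exact: card_lt_image.
by split=> [V [s _ <-] | ]; [exact: stone_clopen_upset | rewrite bigcup_image].
Qed.

End Priestley.

Theorem theorem5p17 (disp : Order.disp_t) (A : tbDistrLatticeType disp)
  (K : Type) (hK : regular_cardinal K) :
  (forall (S : set A) (j : A), card_lt K S -> is_join S j ->
     distributive_join S j)
  <->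
  (forall U : set (@priestley disp A), kappa_clopen_upset K U ->
     pclopen (pcl2 U) -> pcl2 U = pcl U).
Proof.
split=> [dist U /kappa_clopen_upsetP [S SK ->] Uclopen | clU S j SK Sj].
  have [j Uj] := clopen_upset_stone (conj Uclopen (@pup_upset _ _ _)).
  have Sj := is_join_pcl2 Uj.
  apply/seteqP; split; last exact: pcl_sub_pcl2.
  by rewrite Uj; apply/(distributive_joinE Sj); exact: dist.
have Uj := pcl2_stone_union Sj.
have Uclopen : pclopen (pcl2 (stone_union S)).
  by rewrite Uj; exact: (stone_clopen_upset j).1.
have Ukappa : kappa_clopen_upset K (stone_union S).
  by apply/kappa_clopen_upsetP; exists S.
by apply/(distributive_joinE Sj); rewrite -Uj clU.
Qed.
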